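(* Let $f$ be a real entire function of genus $1$ with only negative zeros and with $f(0)>0$. For $s>0$ the function $$h(x)=(\log f)'(x)-(\log f)'(x+s),\qquad x>0,$$ is a generalized Stieltjes function of order $2$.
   Context: A generalized Stieltjes function of order $2$ is a function $F(x)=\int_0^\infty\frac{d\mu(t)}{(x+t)^2}+c$ on $(0,\infty)$ with $\mu$ a positive measure on $[0,\infty)$ making the integral converge and $c\geq0$. *)

From HB Require Import structures.
From mathcomp Require Import all_boot all_order all_algebra.
From mathcomp Require Import all_classical all_reals all_analysis.
Set Implicit Arguments. Unset Strict Implicit. Unset Printing Implicit Defensive.
Import Order.TTheory GRing.Theory Num.Theory.
Import numFieldNormedType.Exports.
Local Open Scope classical_set_scope.
Local Open Scope ring_scope.

Definition weierstrass_factor (R : realType) (p : nat) (u : R) : R :=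
  (1 - u) * expR (\sum_(1 <= k < p.+1) u ^+ k / k%:R).

Definition summable_pow (R : realType) (w : nat -> R) (p : nat) : Prop :=
  cvgn (series (fun n => w n ^+ p.+1)).

(* [genus_of_canonical w p]: p is the genus of the canonical product built on
   the zeros z_n = -1/w_n, i.e. the least integer p with
   sum_n |z_n|^-(p+1) < oo.  (Indices with w_n = 0 encode "no zero"; this
   allows finitely many zeros as well as infinitely many.) *)
Definition genus_of_canonical (R : realType) (w : nat -> R) (p : nat) : Prop :=
  summable_pow w p /\ forall p', (p' < p)%N -> ~ summable_pow w p'.

(* [f] is (the restriction to the real axis of) a real entire function of
   genus 1 all of whose zeros are negative, with f(0) > 0:
   by the definition of the genus, f = e^Q * prod_n E_p(z / z_n) where the
   z_n = -1/w_n < 0 are the zeros (with multiplicity), p is the genus of the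
   canonical product, Q is a (real) polynomial, and genus = max(p, deg Q) = 1.
   No factor z^m occurs since f(0) <> 0. *)
Definition real_entire_genus1_negzeros (R : realType) (f : R -> R) : Prop :=
  exists (w : nat -> R) (p : nat) (Q : {poly R}),
    [/\ forall n, 0 <= w n,
        genus_of_canonical w p,
        maxn p (size Q).-1 = 1%N,
        0 < f 0 &
        forall x : R,
          (fun N => expR Q.[x] *
             \prod_(n < N) weierstrass_factor p (- (w n * x))) @ \oo --> f x].

Definition gen_stieltjes2 (R : realType) (F : R -> R) : Prop :=
  exists (mu : {measure set R -> \bar R}) (c : R),
    0 <= c /\
    forall x : R, 0 < x ->
      (\int[mu]_(t in `[0%R, +oo[) ((x + t) ^- 2)%:E < +oo)%E /\
      (F x)%:E = (\int[mu]_(t in `[0%R, +oo[) ((x + t) ^- 2)%:E + c%:E)%E.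

(* Write the zeros of f as -1/w_n. Genus 1 means that sum_n w_n^(p+1) < oo for
   some p <= 1 and deg Q <= 1, so that on [0, oo)
     ln f(y) = Q(y) + sum_n (ln (1 + w_n y) - p w_n y).
   The second-order Taylor remainder of the n-th term is O(h^2 w_n^2), which is
   O(h^2 w_n^(p+1)), so the series may be differentiated term by term and
     (ln f)'(x) = Q' + sum_n (w_n / (1 + w_n x) - p w_n).
   Hence h(x) = sum_n (w_n / (1 + w_n x) - w_n / (1 + w_n (x + s))), and the
   n-th summand is the integral of (x + t)^-2 over [1/w_n, 1/w_n + s]: h is the
   order-2 Stieltjes transform of the sum of the Lebesgue measures of these
   intervals, with c = 0. *)

Set Warnings "-notation-overridden,-ambiguous-paths,-notation-incompatible-prefix".
From HB Require Import structures.
From mathcomp Require Import all_boot all_order all_algebra.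
From mathcomp Require Import all_classical all_reals all_analysis.
From mathcomp Require Import measurable_realfun ring lra.
Set Implicit Arguments. Unset Strict Implicit. Unset Printing Implicit Defensive.
Import Order.TTheory GRing.Theory Num.Theory.
Import numFieldNormedType.Exports.
Local Open Scope classical_set_scope.
Local Open Scope ring_scope.

Section ln1D.
Variable R : realType.
Implicit Type u : R.

Lemma ln1D_ge_div u : -1 < u -> u / (1 + u) <= ln (1 + u).
Proof.
move=> u_gtN1; have u1_gt0 : 0 < 1 + u by lra.
have v_gtN1 : -1 < (1 + u)^-1 - 1 by rewrite ltrBrDl subrr invr_gt0.
have -> : u / (1 + u) = 1 - (1 + u)^-1 by field; lra.
by have := le_ln1Dx v_gtN1; rewrite addrC subrK lnV ?posrE //; lra.
Qed.

Lemma ln1D_sub_le u : - 2^-1 <= u -> `|ln (1 + u) - u| <= 2 * u ^+ 2.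
Proof.
move=> u_ge; have u_gtN1 : -1 < u by lra.
have u1_gt0 : 0 < 1 + u by lra.
have := le_ln1Dx u_gtN1; have := @ln1D_ge_div u u_gtN1.
have -> : u / (1 + u) = u - u ^+ 2 / (1 + u) by field; lra.
have : u ^+ 2 / (1 + u) <= 2 * u ^+ 2.
  rewrite ler_pdivrMr // -subr_ge0.
  have -> : 2 * u ^+ 2 * (1 + u) - u ^+ 2 = u ^+ 2 * (1 + 2 * u) by ring.
  by rewrite mulr_ge0 ?sqr_ge0 //; lra.
rewrite ler_norml; lra.
Qed.

End ln1D.

Lemma dominated_series (R : realType) (a v : R ^nat) (C : R) :
  0 <= C -> (forall n, 0 <= v n) -> cvgn (series v) ->
  (forall n, `|a n| <= C * v n) ->
  cvgn (series a) /\ `|limn (series a)| <= C * limn (series v).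
Proof.
move=> C_ge0 v_ge0 cvg_v le_av.
have cvg_Cv : cvgn (series (C *: v)) by exact: is_cvg_seriesZ.
have cvg_na : cvgn [normed series a].
  by apply: (series_le_cvg _ _ le_av cvg_Cv) => n; rewrite ?mulr_ge0.
split; first exact: normed_cvg.
apply: le_trans (lim_series_norm cvg_na) _.
rewrite -[C * _]/(C *: _) -lim_seriesZ //.
exact: lim_series_le.
Qed.

Section term_by_term_derivative.
Variables (R : realType) (phi phi' : nat -> R -> R) (v : R ^nat) (x d C : R).
Hypotheses (d_gt0 : 0 < d) (C_ge0 : 0 <= C).
Hypotheses (v_ge0 : forall n, 0 <= v n) (cvg_v : cvgn (series v)).
Hypothesis cvg_phi : forall h, `|h| < d -> cvgn (series (phi^~ (h + x))).
Hypothesis cvg_phi' : cvgn (series (phi'^~ x)).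
Hypothesis phi_remainder : forall n h, `|h| < d ->
  `|phi n (h + x) - phi n x - h * phi' n x| <= C * h ^+ 2 * v n.

Let Phi y := limn (series (phi^~ y)).
Let Phi' := limn (series (phi'^~ x)).

Lemma series_quotient_sub_le h : 0 < `|h| < d ->
  `|h^-1 * (Phi (h + x) - Phi x) - Phi'| <= C * limn (series v) * `|h|.
Proof.
move=> /andP[h_gt0 h_lt_d].
have cvg_phi_x : cvgn (series (phi^~ x)) by rewrite -[x]add0r; apply: cvg_phi; rewrite normr0.
set rho := (phi^~ (h + x) - phi^~ x) - h *: phi'^~ x.
have [_] : cvgn (series rho) /\ `|limn (series rho)| <= C * h ^+ 2 * limn (series v).
  apply: dominated_series => //; first by rewrite mulr_ge0 ?sqr_ge0.
  by move=> n; exact: phi_remainder.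
have cvg_phi_hx := cvg_phi h_lt_d.
rewrite lim_seriesB; last 2 first.
- exact: is_cvg_seriesB.
- exact: is_cvg_seriesZ.
rewrite lim_seriesB // lim_seriesZ //.
have h_neq0 : h != 0 by rewrite -normr_gt0.
have -> : h^-1 * (Phi (h + x) - Phi x) - Phi' = h^-1 * (Phi (h + x) - Phi x - h *: Phi').
  by rewrite /GRing.scale /=; field.
rewrite normrM normfV ler_pdivrMl //.
suff -> : `|h| * (C * limn (series v) * `|h|) = C * h ^+ 2 * limn (series v) by [].
by rewrite -(real_normK (num_real h)); ring.
Qed.

Lemma is_derive_series : is_derive x 1 Phi Phi'.
Proof.
have quotient_cvg : (fun h => h^-1 *: ((Phi \o shift x) (h *: 1) - Phi x)) @ 0^' --> Phi'.
  apply: cvg_zero; apply: (@cvg_to_0_linear _ _ (C * limn (series v)) d d_gt0) => h h_small.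
  by rewrite /= /GRing.scale /= mulr1 series_quotient_sub_le.
by apply: DeriveDef; [apply/cvg_ex; exists Phi' | exact: cvg_lim].
Qed.

End term_by_term_derivative.

Lemma weierstrass_factor_le1 (R : realType) (p : nat) (u : R) : (p <= 1)%N ->
  weierstrass_factor p (- u) = (1 + u) * expR (- (p%:R * u)).
Proof.
rewrite /weierstrass_factor opprK; case: p => [|[|//]] _.
  by rewrite big_geq // mul0r oppr0.
by rewrite big_nat1 expr1 divr1 mul1r.
Qed.

Section canonical_product_genus_le1.
Variables (R : realType) (w : nat -> R) (p : nat).
Hypotheses (w_ge0 : forall n, 0 <= w n) (p_le1 : (p <= 1)%N).

(* [lnfactor n y = ln (weierstrass_factor p (- (w n * y)))] for [y >= 0], and
   [lnfactor' n] is the derivative of [lnfactor n]. *)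
Definition lnfactor n (y : R) := ln (1 + w n * y) - p%:R * (w n * y).
Definition lnfactor' n (y : R) := w n / (1 + w n * y) - p%:R * w n.

Lemma lnfactor_bound n y : 0 <= y -> `|lnfactor n y| <= (2 * y ^+ 2 + y) * w n ^+ p.+1.
Proof.
move=> y_ge0; have wn_ge0 := w_ge0 n; have wy_ge0 : 0 <= w n * y by rewrite mulr_ge0.
have y2_ge0 := sqr_ge0 y.
rewrite /lnfactor; case: p p_le1 => [|[|//]] _.
  rewrite mul0r subr0 expr1 ger0_norm; last by rewrite ln_ge0 // lerDl.
  by apply: le_trans (le_ln1Dx _) _; nra.
rewrite mul1r; apply: le_trans (ln1D_sub_le (u := w n * y) _) _; first lra.
by rewrite exprMn; nra.
Qed.

Lemma lnfactor'_bound n y : 0 <= y -> `|lnfactor' n y| <= (1 + y) * w n ^+ p.+1.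
Proof.
move=> y_ge0; have wn_ge0 := w_ge0 n; have wy_ge0 : 0 <= w n * y by rewrite mulr_ge0.
have d_gt0 : 0 < 1 + w n * y by lra.
rewrite /lnfactor'; case: p p_le1 => [|[|//]] _.
  rewrite mul0r subr0 expr1 ger0_norm; last by rewrite divr_ge0 // ltW.
  suff : w n / (1 + w n * y) <= w n by nra.
  by rewrite ler_pdivrMr //; nra.
have -> : w n / (1 + w n * y) - 1%:R * w n = - (w n ^+ 2 * y / (1 + w n * y)).
  by field; lra.
have w2y_ge0 : 0 <= w n ^+ 2 * y by rewrite mulr_ge0 ?sqr_ge0.
rewrite normrN ger0_norm; last by rewrite divr_ge0 // ltW.
have : w n ^+ 2 * y / (1 + w n * y) <= w n ^+ 2 * y.
  by rewrite ler_pdivrMr //; have := mulr_ge0 w2y_ge0 wy_ge0; nra.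
by have := sqr_ge0 (w n); nra.
Qed.

Lemma lnfactor_remainder n y h : 0 < y -> `|h| <= y / 2 ->
  `|lnfactor n (h + y) - lnfactor n y - h * lnfactor' n y| <= 2 * h ^+ 2 * w n ^+ 2.
Proof.
move=> y_gt0 h_le; have wn_ge0 := w_ge0 n.
have wy_ge0 : 0 <= w n * y by rewrite mulr_ge0 // ltW.
have d_gt0 : 0 < 1 + w n * y by lra.
set u := h * w n / (1 + w n * y).
have u_ge : - 2^-1 <= u.
  rewrite /u ler_pdivlMr //; move: h_le; rewrite ler_norml => /andP[h_ge _]; nra.
have -> : lnfactor n (h + y) - lnfactor n y - h * lnfactor' n y = ln (1 + u) - u.
  rewrite /lnfactor /lnfactor'.
  have -> : 1 + w n * (h + y) = (1 + w n * y) * (1 + u) by rewrite /u; field; lra.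
  by rewrite lnM ?posrE; [rewrite /u; field; lra | lra | lra].
apply: le_trans (ln1D_sub_le u_ge) _.
suff : u ^+ 2 <= h ^+ 2 * w n ^+ 2 by lra.
rewrite /u expr_div_n -exprMn ler_pdivrMr ?exprn_gt0 //.
by rewrite -[X in X <= _]mulr1 ler_wpM2l ?sqr_ge0 // exprn_ege1 //; lra.
Qed.

Hypothesis cvg_pow : cvgn (series (fun n => w n ^+ p.+1)).

Lemma sqr_le_pow : exists2 K, 0 <= K & forall n, w n ^+ 2 <= K * w n ^+ p.+1.
Proof.
case: p p_le1 cvg_pow => [|[|//]] _ cvg_w; last by exists 1 => // n; rewrite mul1r.
have [M le_wM] := bounded_fun_has_ubound (cvg_series_bounded cvg_w).
have wM n : w n <= M by rewrite -[w n]expr1; apply: le_wM; exists n.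
by exists M => [|n]; [exact: le_trans (w_ge0 0) (wM 0%N) | rewrite expr2 expr1 ler_wpM2r].
Qed.

Lemma cvg_lnfactor y : 0 <= y -> cvgn (series (lnfactor^~ y)).
Proof.
move=> y_ge0; apply: (dominated_series _ _ cvg_pow (fun n => lnfactor_bound n y_ge0)).1.
- by rewrite addr_ge0 ?mulr_ge0 ?sqr_ge0.
- by move=> n; rewrite exprn_ge0.
Qed.

Lemma cvg_lnfactor' y : 0 <= y -> cvgn (series (lnfactor'^~ y)).
Proof.
move=> y_ge0; apply: (dominated_series _ _ cvg_pow (fun n => lnfactor'_bound n y_ge0)).1.
- by rewrite addr_ge0.
- by move=> n; rewrite exprn_ge0.
Qed.

Lemma prod_weierstrass_factor y N : 0 <= y ->
  \prod_(n < N) weierstrass_factor p (- (w n * y)) = expR (series (lnfactor^~ y) N).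
Proof.
move=> y_ge0; elim: N => [|N IH]; first by rewrite big_ord0 /series /= big_geq // expR0.
rewrite big_ord_recr /= IH seriesSr expRD weierstrass_factor_le1 //.
rewrite /lnfactor expRD lnK ?posrE ?mulrN ?expRN //.
by have := mulr_ge0 (w_ge0 N) y_ge0; lra.
Qed.

Lemma canonical_product_cvg y : 0 <= y ->
  (fun N => \prod_(n < N) weierstrass_factor p (- (w n * y))) @ \oo -->
  expR (limn (series (lnfactor^~ y))).
Proof.
move=> y_ge0; under eq_fun do rewrite prod_weierstrass_factor //.
exact: cvg_comp (cvg_lnfactor y_ge0) (@continuous_expR _ _).
Qed.

Lemma is_derive_ln_canonical_product (x : R) : 0 < x ->
  is_derive x 1 (fun y => limn (series (lnfactor^~ y))) (limn (series (lnfactor'^~ x))).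
Proof.
move=> x_gt0; have [K K_ge0 le_sqr] := sqr_le_pow.
apply: (@is_derive_series _ _ _ _ _ (x / 2) (2 * K)) cvg_pow _ _ _ => //.
- by rewrite divr_gt0.
- by rewrite mulr_ge0.
- by move=> n; rewrite exprn_ge0.
- by move=> h /ltW h_le; apply: cvg_lnfactor; move: h_le; rewrite ler_norml; lra.
- exact/cvg_lnfactor'/ltW.
move=> n h /ltW h_le; apply: le_trans (lnfactor_remainder _ x_gt0 h_le) _.
by have := le_sqr n; have := sqr_ge0 h; nra.
Qed.

End canonical_product_genus_le1.

Section inverse_square.
Variable R : realType.
Implicit Types x t : R.

Lemma is_derive_inv_shift x t : x + t != 0 ->
  is_derive t 1 (fun y => - (x + y)^-1) ((x + t) ^- 2).
Proof.
move=> xt_neq0; have tx_neq0 : shift x t != 0 by rewrite /shift /= addrC.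
have -> : (fun y => - (x + y)^-1) = - (fun y => (shift x y)^-1).
  by apply/funext => y; rewrite /shift /= addrC.
have := is_deriveN (is_deriveV tx_neq0 (is_derive_shift t 1 x)).
move/is_derive_eq; apply.
by rewrite /GRing.scale /= mulr1 opprK /shift /= addrC.
Qed.

Lemma inv_sqr_shift_continuous x t : x + t != 0 ->
  {for t, continuous (fun y => (x + y) ^- 2)}.
Proof.
move=> xt_neq0; apply: cvgV; first by rewrite expf_neq0.
by rewrite expr2; apply: cvgM; apply: cvgD => //; exact: cvg_cst.
Qed.

Lemma integral_inv_sqr x a b : 0 < x + a -> a < b ->
  (\int[lebesgue_measure]_(t in `[a, b]) ((x + t) ^- 2)%:E =
   ((x + a)^-1 - (x + b)^-1)%:E)%E.
Proof.
move=> xa_gt0 ab; have xt_neq0 t : a <= t -> x + t != 0.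
  by move=> le_at; rewrite gt_eqF //; lra.
have F_cont t : a <= t -> {for t, continuous (fun y => - (x + y)^-1)}.
  move=> le_at; apply: cvgN; apply: cvgV; first exact: xt_neq0.
  by apply: cvgD => //; exact: cvg_cst.
rewrite (@continuous_FTC2 _ _ (fun y => - (x + y)^-1)) //.
- by rewrite -EFinD opprK addrC.
- apply: continuous_in_subspaceT => t; rewrite inE /= in_itv /= => /andP[le_at _].
  exact/inv_sqr_shift_continuous/xt_neq0.
- split.
  + move=> t; rewrite in_itv /= => /andP[lt_at _].
    by case: (is_derive_inv_shift (xt_neq0 t (ltW lt_at))).
  + exact/cvg_at_right_filter/F_cont.
  + exact/cvg_at_left_filter/F_cont/ltW.
- move=> t; rewrite in_itv /= => /andP[lt_at _].
  by rewrite derive1E; apply: derive_val; exact: is_derive_inv_shift (xt_neq0 t (ltW lt_at)).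
Qed.

Lemma measurable_inv_sqr x : 0 < x ->
  measurable_fun (`[0%R, +oo[ : set R) (fun t => ((x + t) ^- 2)%:E).
Proof.
move=> x_gt0; apply/measurable_EFinP.
apply: subspace_continuous_measurable_fun => //.
apply: continuous_in_subspaceT => t; rewrite inE /= in_itv /= andbT => t_ge0.
by apply: inv_sqr_shift_continuous; rewrite gt_eqF //; lra.
Qed.

End inverse_square.

Section stieltjes_measure.
Variables (R : realType) (w : nat -> R) (s : R).
Hypotheses (w_ge0 : forall n, 0 <= w n) (s_gt0 : 0 < s).

Lemma lt_inv_addr n : (w n)^-1 < (w n)^-1 + s.
Proof. by rewrite ltrDl. Qed.

(* s times the uniform probability on [1/w_n, 1/w_n + s], i.e. the Lebesgue
   measure restricted to that interval; the zero measure when w_n = 0 encodes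
   "no n-th zero". *)
Definition interval_measure n : {measure set (measurableTypeR R) -> \bar R} :=
  if 0 < w n then
    (mscale (NngNum (ltW s_gt0)) (uniform_prob (lt_inv_addr n)) : {measure set _ -> \bar R})
  else mzero.

Lemma measurable_idfunR : measurable_fun [set: measurableTypeR R] (idfun : _ -> R).
Proof. exact: measurable_id. Qed.

(* The pushforward along the identity moves the measure from the Lebesgue
   sigma-algebra type [measurableTypeR R] to the (equal) Borel structure of [R]. *)
Definition stieltjes_measure : {measure set R -> \bar R} :=
  @measure_function_pushforward__canonical__measure_function_Measure _ _
    (measurableTypeR R) R R (mseries interval_measure 0) idfun measurable_idfunR.

Lemma integral_interval_measure x n : 0 < x ->
  (\int[interval_measure n]_(t in `[0%R, +oo[) ((x + t) ^- 2)%:E =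
   (w n / (1 + w n * x) - w n / (1 + w n * (x + s)))%:E)%E.
Proof.
move=> x_gt0; have f_ge0 t : (0 <= ((x + t) ^- 2)%:E)%E.
  by rewrite lee_fin invr_ge0 sqr_ge0.
have mf : measurable_fun (T := measurableTypeR R) (`[0%R, +oo[ : set R)
    (fun t => ((x + t) ^- 2)%:E).
  exact: measurable_inv_sqr.
rewrite /interval_measure; case: ifPn => [wn_gt0|]; last first.
  rewrite -leNgt => wn_le0; have -> : w n = 0 by apply/le_anti; rewrite wn_le0 w_ge0.
  by rewrite integral_measure_zero !mul0r subrr.
set a := (w n)^-1; have a_ge0 : 0 <= a by rewrite invr_ge0 ltW.
rewrite ge0_integral_mscale // integral_mkcond integral_uniform; last 2 first.
- exact/(measurable_restrictT _ _).1.
- by move=> t; rewrite patchE; case: ifPn.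
rewrite (_ : (\int[lebesgue_measure]_(t in `[a, (a + s)%R]) _ =
    \int[lebesgue_measure]_(t in `[a, (a + s)%R]) ((x + t) ^- 2)%:E)%E); last first.
  apply: eq_integral => t; rewrite inE /= in_itv /= => /andP[le_at _].
  by rewrite patchE mem_set //= in_itv /= andbT (le_trans a_ge0 le_at).
rewrite integral_inv_sqr; last 2 first.
- lra.
- by rewrite ltrDl.
rewrite /= -!EFinM; congr EFin.
have wn_neq0 : w n != 0 by rewrite gt_eqF.
have wx_gt0 := mulr_gt0 wn_gt0 x_gt0.
have wxs_gt0 : 0 < w n * (x + s) by rewrite mulr_gt0 // addr_gt0.
have d1 : 1 + w n * x != 0 by rewrite gt_eqF //; lra.
have d2 : 1 + w n * (x + s) != 0 by rewrite gt_eqF //; lra.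
have d3 : 1 + s * w n - 1 != 0 by rewrite addrAC subrr add0r mulf_neq0 // gt_eqF.
by rewrite /a; field; rewrite d1 d2 wn_neq0 d3.
Qed.

Lemma integral_stieltjes_measure x : 0 < x ->
  (\int[stieltjes_measure]_(t in `[0%R, +oo[) ((x + t) ^- 2)%:E =
   \sum_(n <oo) (w n / (1 + w n * x) - w n / (1 + w n * (x + s)))%:E)%E.
Proof.
move=> x_gt0; have f_ge0 t : (0 <= ((x + t) ^- 2)%:E)%E.
  by rewrite lee_fin invr_ge0 sqr_ge0.
rewrite ge0_integral_pushforward //; last exact: measurable_inv_sqr.
rewrite ge0_integral_measure_series //; last exact: measurable_inv_sqr.
- by apply: eq_eseriesr => n _; rewrite integral_interval_measure.
- exact: measurable_itv.
- by move=> t _; apply: f_ge0.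
- exact: measurable_idfunR.
Qed.

End stieltjes_measure.

Section log_derivative.
Variables (R : realType) (w : nat -> R) (p : nat) (c0 c1 : R) (f : R -> R).
Hypotheses (w_ge0 : forall n, 0 <= w n) (p_le1 : (p <= 1)%N).
Hypothesis cvg_pow : cvgn (series (fun n => w n ^+ p.+1)).
Hypothesis f_lim : forall y, 0 <= y ->
  (fun N => expR (c0 + c1 * y) * \prod_(n < N) weierstrass_factor p (- (w n * y)))
    @ \oo --> f y.

Lemma ln_entire_eq y : 0 <= y ->
  ln (f y) = c0 + c1 * y + limn (series (lnfactor w p ^~ y)).
Proof.
move=> y_ge0; rewrite -[RHS]expRK expRD; congr ln.
have prod_lim : (fun N => expR (c0 + c1 * y) *
    \prod_(n < N) weierstrass_factor p (- (w n * y))) @ \oo -->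
    expR (c0 + c1 * y) * expR (limn (series (lnfactor w p ^~ y))).
  by apply: cvgM; [exact: cvg_cst | exact: canonical_product_cvg].
exact: (cvg_unique _ (f_lim y_ge0) prod_lim).
Qed.

Lemma derive1_ln_entire x : 0 < x ->
  derive1 (fun y => ln (f y)) x = c1 + limn (series (lnfactor' w p ^~ x)).
Proof.
move=> x_gt0; rewrite derive1E; apply: derive_val.
have := is_derive_ln_canonical_product w_ge0 p_le1 cvg_pow x_gt0.
set S := fun y => _ => dS.
apply: (@near_eq_is_derive _ _ _ (fun y => c0 + c1 * y + S y)).
  by near=> y; rewrite ln_entire_eq //; apply: ltW; near: y; exact: lt_nbhsr.
have -> : (fun y => c0 + c1 * y + S y) = cst c0 + c1 *: id + S by [].
by apply: is_derive_eq; rewrite /GRing.scale /= mulr1 add0r.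
Unshelve. all: by end_near. Qed.

End log_derivative.

Lemma eseries_EFin (R : realType) (g : R ^nat) : cvgn (series g) ->
  (\sum_(n <oo) (g n)%:E)%E = (limn (series g))%:E.
Proof.
move=> cvg_g; rewrite -EFin_lim //.
by congr (limn _); apply/funext => N; rewrite /series /= sumEFin.
Qed.

Lemma horner_size_le2 (R : nzRingType) (Q : {poly R}) (x : R) : (size Q <= 2)%N ->
  Q.[x] = Q`_0 + Q`_1 * x.
Proof.
move=> size_Q; rewrite (horner_coef_wide _ size_Q) !big_ord_recl big_ord0 /=.
by rewrite expr0 mulr1 expr1 addr0.
Qed.

Theorem corollary4p10 (R : realType) (f : R -> R) :
  real_entire_genus1_negzeros f ->
  forall s : R, 0 < s ->
    gen_stieltjes2
      (fun x => derive1 (fun y => ln (f y)) x - derive1 (fun y => ln (f y)) (x + s)).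
Proof.
move=> [w [p [Q [w_ge0 [cvg_pow _] genus1 _ f_lim]]]] s s_gt0.
have p_le1 : (p <= 1)%N by rewrite -genus1 leq_maxl.
have size_Q : (size Q <= 2)%N.
  by move: (leq_maxr p (size Q).-1); rewrite genus1; case: (size Q) => [|[|[|]]].
have f_lim' y : 0 <= y -> (fun N => expR (Q`_0 + Q`_1 * y) *
    \prod_(n < N) weierstrass_factor p (- (w n * y))) @ \oo --> f y.
  by rewrite -horner_size_le2.
exists (stieltjes_measure w s_gt0), 0; split => // x x_gt0.
have xs_gt0 : 0 < x + s by rewrite addr_gt0.
have cvg_x := cvg_lnfactor' w_ge0 p_le1 cvg_pow (ltW x_gt0).
have cvg_xs := cvg_lnfactor' w_ge0 p_le1 cvg_pow (ltW xs_gt0).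
rewrite integral_stieltjes_measure // adde0.
have g_eq n : w n / (1 + w n * x) - w n / (1 + w n * (x + s)) =
    lnfactor' w p n x - lnfactor' w p n (x + s).
  by rewrite /lnfactor' /=; ring.
rewrite (eq_eseriesr (fun n _ => congr1 EFin (g_eq n))) eseries_EFin; last first.
  exact: is_cvg_seriesB.
rewrite (lim_seriesB cvg_x cvg_xs).
rewrite !(derive1_ln_entire w_ge0 p_le1 cvg_pow f_lim') //.
by split; [exact: ltry | congr EFin; ring].
Qed.
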